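(* Let $A,B$ be non-empty sets, $I$ a non-empty index set, $\{V_i\}_{i\in I}\subseteq\mathcal R(A)$, $\{W_i\}_{i\in I}\subseteq\mathcal R(B)$, ${\cal A}=(A,I,V_i)$, ${\cal B}=(B,I,W_i)$, let $R\in\mathcal R(A,B)$ be a uniform fuzzy relation and $Z\in\mathcal R(A,B)$ with $R\le Z$. Then $R$ is a solution to $WL^{2\text{-}3}(A,B,I,V_i,W_i,Z)$ if and only if all of the following hold: (i) $E_A^R$ is a solution to $WL^{1\text{-}4}(A,I,V_i,Z\circ Z^{-1})$; (ii) $E_B^R$ is a solution to $WL^{1\text{-}4}(B,I,W_i,Z^{-1}\circ Z)$; (iii) $\widetilde R$ is an isomorphism of the quotient fuzzy relational systems ${\cal A}/E_A^R$ and ${\cal B}/E_B^R$.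
   Context: $\mathcal L=(L,\wedge,\vee,\otimes,\to,0,1)$ is a complete residuated lattice; $x\leftrightarrow y=(x\to y)\wedge(y\to x)$. For non-empty sets $X,Y$, $\mathcal R(X,Y)$ is the set of fuzzy relations $X\times Y\to L$, $\mathcal R(X)=\mathcal R(X,X)$, ordered pointwise; $R^{-1}(y,x)=R(x,y)$; $(R\circ S)(x,t)=\bigvee_{y}R(x,y)\otimes S(y,t)$. For $R\in\mathcal R(A,B)$: kernel $E_A^R(a_1,a_2)=\bigwedge_{b\in B}R(a_1,b)\leftrightarrow R(a_2,b)$; co-kernel $E_B^R(b_1,b_2)=\bigwedge_{a\in A}R(a,b_1)\leftrightarrow R(a,b_2)$ (both fuzzy equivalences). $R$ is uniform if every $a$ has some $b$ with $R(a,b)=1$, every $b$ has some $a$ with $R(a,b)=1$, and $R(a,b_1)\otimes R(a,b_2)\le E_B^R(b_1,b_2)$ for all $a,b_1,b_2$. For uniform $R$, with $E=E_A^R$, $F=E_B^R$, the map $\widetilde R:A/E\to B/F$, $\widetilde R(E_a)=F_{\psi(a)}$, where $\psi:A\to B$ is any function with $R(a,\psi(a))=1$ for all $a$, is well defined (independent of choices) and bijective. For a fuzzy equivalence $E$ on $X$ (reflexive, symmetric, $E(x,y)\otimes E(y,z)\le E(x,z)$): $E_x(y)=E(x,y)$, $X/E=\{E_x\}$; the quotient of ${\cal X}=(X,I,V_i)$ is ${\cal X}/E=(X/E,I,V_i^{X/E})$ with $V_i^{X/E}(E_{x_1},E_{x_2})=(E\circ V_i\circ E)(x_1,x_2)$.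 An isomorphism of $(X,I,V_i)$ and $(Y,I,W_i)$ is a bijection $\varphi$ with $V_i(x_1,x_2)=W_i(\varphi(x_1),\varphi(x_2))$ for all $x_1,x_2$, $i$. $WL^{2\text{-}3}(A,B,I,V_i,W_i,Z)$ (unknown $U\in\mathcal R(A,B)$): $U^{-1}\circ V_i\le W_i\circ U^{-1}$ and $U\circ W_i\le V_i\circ U$ for all $i$, and $U\le Z$. $WL^{1\text{-}4}(X,I,V_i,W)$ (unknown $U\in\mathcal R(X)$): $U\circ V_i\le V_i\circ U$ and $U^{-1}\circ V_i\le V_i\circ U^{-1}$ for all $i$, and $U\le W$, $U^{-1}\le W$. *)

From Stdlib Require Import ClassicalEpsilon.

Record CRL := {
  car :> Type;
  le : car -> car -> Prop;
  le_refl : forall x, le x x;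
  le_trans : forall x y z, le x y -> le y z -> le x z;
  le_antisym : forall x y, le x y -> le y x -> x = y;
  sup : (car -> Prop) -> car;
  sup_ub : forall (P : car -> Prop) x, P x -> le x (sup P);
  sup_least : forall (P : car -> Prop) y, (forall x, P x -> le x y) -> le (sup P) y;
  inf : (car -> Prop) -> car;
  inf_lb : forall (P : car -> Prop) x, P x -> le (inf P) x;
  inf_greatest : forall (P : car -> Prop) y, (forall x, P x -> le y x) -> le y (inf P);
  zero : car;
  one : car;
  zero_least : forall x, le zero x;
  one_greatest : forall x, le x one;
  tens : car -> car -> car;
  tens_assoc : forall x y z, tens x (tens y z) = tens (tens x y) z;
  tens_comm : forall x y, tens x y = tens y x;
  tens_one : forall x, tens x one = x;
  impl : car -> car -> car;
  adjoint : forall x y z, le (tens x y) z <-> le x (impl y z)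
}.

Arguments le {_}. Arguments sup {_}. Arguments inf {_}. Arguments zero {_}.
Arguments one {_}. Arguments tens {_}. Arguments impl {_}.

Section FuzzyRel.
Variable L : CRL.

Definition meet (x y : L) : L := inf (fun z => z = x \/ z = y).
Definition join (x y : L) : L := sup (fun z => z = x \/ z = y).
Definition biimp (x y : L) : L := meet (impl x y) (impl y x).

Definition frel (X Y : Type) := X -> Y -> L.

Definition rle {X Y : Type} (R S : frel X Y) : Prop :=
  forall x y, le (R x y) (S x y).

Definition rinv {X Y : Type} (R : frel X Y) : frel Y X := fun y x => R x y.

Definition rcomp {X Y Z : Type} (R : frel X Y) (S : frel Y Z) : frel X Z :=
  fun x t => sup (fun v => exists y, v = tens (R x y) (S y t)).

Definition kernel {A B : Type} (R : frel A B) : frel A A :=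
  fun a1 a2 => inf (fun v => exists b, v = biimp (R a1 b) (R a2 b)).

Definition cokernel {A B : Type} (R : frel A B) : frel B B :=
  fun b1 b2 => inf (fun v => exists a, v = biimp (R a b1) (R a b2)).

Definition uniform {A B : Type} (R : frel A B) : Prop :=
  (forall a, exists b, R a b = one) /\
  (forall b, exists a, R a b = one) /\
  (forall a b1 b2, le (tens (R a b1) (R a b2)) (cokernel R b1 b2)).

Definition fequiv {X : Type} (E : frel X X) : Prop :=
  (forall x, E x x = one) /\ (forall x y, E x y = E y x) /\
  (forall x y z, le (tens (E x y) (E y z)) (E x z)).

Definition qset {X : Type} (E : frel X X) : Type :=
  { f : X -> L | exists x, f = E x }.

Definition qclass {X : Type} (E : frel X X) (x : X) : qset E :=
  exist _ (E x) (ex_intro _ x eq_refl).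

(** a chosen representative of a class (the quotient relations do not depend
    on this choice when E is a fuzzy equivalence) *)
Definition qrepr {X : Type} {E : frel X X} (c : qset E) : X :=
  proj1_sig (constructive_indefinite_description _ (proj2_sig c)).

Definition qrel {X : Type} (E : frel X X) (V : frel X X) : frel (qset E) (qset E) :=
  fun c1 c2 => rcomp (rcomp E V) E (qrepr c1) (qrepr c2).

Definition fiso {X Y I : Type} (V : I -> frel X X) (W : I -> frel Y Y) (phi : X -> Y) : Prop :=
  (forall x1 x2, phi x1 = phi x2 -> x1 = x2) /\
  (forall y, exists x, phi x = y) /\
  (forall i x1 x2, V i x1 x2 = W i (phi x1) (phi x2)).

(** the map R~ : A/E_A^R -> B/E_B^R, E_a |-> F_{psi a} for psi with R(a, psi a) = 1 *)
Definition Rtilde {A B : Type} (R : frel A B) (psi : A -> B)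
  (c : qset (kernel R)) : qset (cokernel R) :=
  qclass (cokernel R) (psi (qrepr c)).

Definition WL23_sol {A B I : Type} (V : I -> frel A A) (W : I -> frel B B)
  (Z : frel A B) (U : frel A B) : Prop :=
  (forall i, rle (rcomp (rinv U) (V i)) (rcomp (W i) (rinv U))) /\
  (forall i, rle (rcomp U (W i)) (rcomp (V i) U)) /\
  rle U Z.

Definition WL14_sol {X I : Type} (V : I -> frel X X) (W : frel X X) (U : frel X X) : Prop :=
  (forall i, rle (rcomp U (V i)) (rcomp (V i) U)) /\
  (forall i, rle (rcomp (rinv U) (V i)) (rcomp (V i) (rinv U))) /\
  rle U W /\ rle (rinv U) W.

End FuzzyRel.

(* For a uniform relation R the kernel E and the co-kernel F factor as
   E = R ∘ R⁻¹ and F = R⁻¹ ∘ R, and R ∘ R⁻¹ ∘ R = R.  With these identities the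
   two inequalities of WL^{2-3} are equivalent, by relational calculus, to
   E ∘ V ⊆ V ∘ E, F ∘ W ⊆ W ∘ F and F ∘ W ∘ F = R⁻¹ ∘ V ∘ R; the bounds by
   Z ∘ Z⁻¹ and Z⁻¹ ∘ Z come from R ⊆ Z by monotonicity.  For a section psi of R
   one has E(a, a') = R(a', psi a), so the quotient relation (E ∘ V ∘ E)(a1, a2)
   equals (R⁻¹ ∘ V ∘ R)(psi a1, psi a2).  Since the map R~ is always a bijection,
   it is an isomorphism of the quotients exactly when F ∘ W ∘ F = R⁻¹ ∘ V ∘ R. *)

From Stdlib Require Import ClassicalEpsilon FunctionalExtensionality ProofIrrelevance.

Section FuzzyRelations.
Context {L : CRL}.

Local Notation "R ∘ S" := (rcomp L R S) (at level 40, left associativity).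
Local Notation "R ⁻¹" := (rinv L R) (at level 1, left associativity, format "R ⁻¹").
Local Notation "R ⊆ S" := (rle L R S) (at level 70, no associativity).

Lemma tens_one_l (x : L) : tens one x = x.
Proof. rewrite tens_comm; apply tens_one. Qed.

Lemma le_impl_of_tens_le (x y z : L) : le (tens x y) z -> le x (impl y z).
Proof. apply adjoint. Qed.

Lemma tens_le_of_le_impl (x y z : L) : le x (impl y z) -> le (tens x y) z.
Proof. apply adjoint. Qed.

Lemma le_tens_l (x x' y : L) : le x x' -> le (tens x y) (tens x' y).
Proof.
  intro Hx; apply tens_le_of_le_impl, le_trans with (y := x'); [exact Hx |].
  apply le_impl_of_tens_le, le_refl.
Qed.

Lemma le_tens (x x' y y' : L) : le x x' -> le y y' -> le (tens x y) (tens x' y').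
Proof.
  intros Hx Hy; apply le_trans with (y := tens x' y); [now apply le_tens_l |].
  rewrite (tens_comm _ x' y), (tens_comm _ x' y'); now apply le_tens_l.
Qed.

Lemma sup_ext (P Q : L -> Prop) : (forall v, P v <-> Q v) -> sup P = sup Q.
Proof.
  intro HPQ; apply le_antisym; apply sup_least; intros v Hv; apply sup_ub, HPQ, Hv.
Qed.

Lemma inf_ext (P Q : L -> Prop) : (forall v, P v <-> Q v) -> inf P = inf Q.
Proof.
  intro HPQ; apply le_antisym; apply inf_greatest; intros v Hv; apply inf_lb, HPQ, Hv.
Qed.

Lemma meet_le_l (x y : L) : le (meet L x y) x.
Proof. apply inf_lb; auto. Qed.

Lemma meet_le_r (x y : L) : le (meet L x y) y.
Proof. apply inf_lb; auto. Qed.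

Lemma le_meet (x y c : L) : le c x -> le c y -> le c (meet L x y).
Proof. intros; apply inf_greatest; intros v [-> | ->]; assumption. Qed.

Lemma biimp_sym (x y : L) : biimp L x y = biimp L y x.
Proof. apply le_antisym; apply le_meet; apply meet_le_r || apply meet_le_l. Qed.

Lemma tens_biimp_le (x y : L) : le (tens (biimp L x y) x) y.
Proof. apply tens_le_of_le_impl, meet_le_l. Qed.

Lemma le_biimp (c x y : L) : le (tens c x) y -> le (tens c y) x -> le c (biimp L x y).
Proof. intros; apply le_meet; apply le_impl_of_tens_le; assumption. Qed.

Lemma biimp_refl (x : L) : biimp L x x = one.
Proof.
  apply le_antisym; [apply one_greatest |].
  apply le_biimp; rewrite tens_one_l; apply le_refl.
Qed.

Lemma le_rcomp {X Y Z} (R : frel L X Y) (S : frel L Y Z) x y z :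
  le (tens (R x y) (S y z)) ((R ∘ S) x z).
Proof. apply sup_ub; eauto. Qed.

Lemma rcomp_le {X Y Z} (R : frel L X Y) (S : frel L Y Z) x z (c : L) :
  (forall y, le (tens (R x y) (S y z)) c) -> le ((R ∘ S) x z) c.
Proof. intro H; apply sup_least; intros v [y ->]; apply H. Qed.

Lemma tens_rcomp_le {X Y Z} (R : frel L X Y) (S : frel L Y Z) x z (t c : L) :
  (forall y, le (tens (tens (R x y) (S y z)) t) c) -> le (tens ((R ∘ S) x z) t) c.
Proof. intro H; apply tens_le_of_le_impl, rcomp_le; intro y; apply le_impl_of_tens_le, H. Qed.

Lemma rcomp_ext {X X' Y Z Z'} (R : frel L X Y) (R' : frel L X' Y)
  (S : frel L Y Z) (S' : frel L Y Z') x x' z z' :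
  (forall y, R x y = R' x' y) -> (forall y, S y z = S' y z') ->
  (R ∘ S) x z = (R' ∘ S') x' z'.
Proof.
  intros HR HS; apply sup_ext; intro v.
  split; intros [y ->]; exists y; now rewrite HR, HS.
Qed.

Lemma rle_refl {X Y} (R : frel L X Y) : R ⊆ R.
Proof. intros x y; apply le_refl. Qed.

Lemma rle_trans {X Y} (R S T : frel L X Y) : R ⊆ S -> S ⊆ T -> R ⊆ T.
Proof. intros HRS HST x y; apply le_trans with (y := S x y); auto. Qed.

Lemma rle_antisym {X Y} (R S : frel L X Y) : R ⊆ S -> S ⊆ R -> R = S.
Proof.
  intros HRS HSR; extensionality x; extensionality y; apply le_antisym; auto.
Qed.

Lemma rcomp_mono {X Y Z} (R R' : frel L X Y) (S S' : frel L Y Z) :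
  R ⊆ R' -> S ⊆ S' -> R ∘ S ⊆ R' ∘ S'.
Proof.
  intros HR HS x z; apply rcomp_le; intro y.
  apply le_trans with (y := tens (R' x y) (S' y z)); [now apply le_tens | apply le_rcomp].
Qed.

Lemma rinv_rcomp {X Y Z} (R : frel L X Y) (S : frel L Y Z) : (R ∘ S)⁻¹ = S⁻¹ ∘ R⁻¹.
Proof.
  extensionality z; extensionality x; apply sup_ext; intro v.
  split; intros [y ->]; exists y; apply tens_comm.
Qed.

Lemma rcomp_refl_l {X Y} (E : frel L X X) (S : frel L X Y) :
  (forall x, E x x = one) -> S ⊆ E ∘ S.
Proof.
  intros HE x y; rewrite <- (tens_one_l (S x y)), <- (HE x); apply le_rcomp.
Qed.

Lemma rcomp_refl_r {X Y} (E : frel L Y Y) (S : frel L X Y) :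
  (forall y, E y y = one) -> S ⊆ S ∘ E.
Proof.
  intros HE x y; rewrite <- (tens_one L (S x y)), <- (HE y); apply le_rcomp.
Qed.

Lemma rcomp_assoc {X Y Z U} (R : frel L X Y) (S : frel L Y Z) (T : frel L Z U) :
  R ∘ S ∘ T = R ∘ (S ∘ T).
Proof.
  apply rle_antisym; intros x u; apply rcomp_le.
  - intro z; apply tens_rcomp_le; intro y; rewrite <- tens_assoc.
    apply le_trans with (y := tens (R x y) ((S ∘ T) y u));
      [apply le_tens; [apply le_refl | apply le_rcomp] | apply le_rcomp].
  - intro y; rewrite tens_comm; apply tens_rcomp_le; intro z.
    rewrite tens_comm, tens_assoc.
    apply le_trans with (y := tens ((R ∘ S) x z) (T z u));
      [apply le_tens; [apply le_rcomp | apply le_refl] | apply le_rcomp].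
Qed.

Section Kernels.
Context {A B : Type} (R : frel L A B).

Lemma kernel_le a1 a2 b : le (kernel L R a1 a2) (biimp L (R a1 b) (R a2 b)).
Proof. apply inf_lb; eauto. Qed.

Lemma le_kernel a1 a2 (c : L) :
  (forall b, le c (biimp L (R a1 b) (R a2 b))) -> le c (kernel L R a1 a2).
Proof. intro H; apply inf_greatest; intros v [b ->]; apply H. Qed.

Lemma cokernel_le b1 b2 a : le (cokernel L R b1 b2) (biimp L (R a b1) (R a b2)).
Proof. apply inf_lb; eauto. Qed.

Lemma le_cokernel b1 b2 (c : L) :
  (forall a, le c (biimp L (R a b1) (R a b2))) -> le c (cokernel L R b1 b2).
Proof. intro H; apply inf_greatest; intros v [a ->]; apply H. Qed.

Lemma kernel_sym a1 a2 : kernel L R a1 a2 = kernel L R a2 a1.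
Proof.
  apply le_antisym; apply le_kernel; intro b; rewrite biimp_sym; apply kernel_le.
Qed.

Lemma cokernel_sym b1 b2 : cokernel L R b1 b2 = cokernel L R b2 b1.
Proof.
  apply le_antisym; apply le_cokernel; intro a; rewrite biimp_sym; apply cokernel_le.
Qed.

Lemma kernel_refl a : kernel L R a a = one.
Proof.
  apply le_antisym; [apply one_greatest |].
  apply le_kernel; intro b; rewrite biimp_refl; apply le_refl.
Qed.

Lemma cokernel_refl b : cokernel L R b b = one.
Proof.
  apply le_antisym; [apply one_greatest |].
  apply le_cokernel; intro a; rewrite biimp_refl; apply le_refl.
Qed.

Lemma rinv_kernel : (kernel L R)⁻¹ = kernel L R.
Proof. extensionality a2; extensionality a1; apply kernel_sym. Qed.

Lemma rinv_cokernel : (cokernel L R)⁻¹ = cokernel L R.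
Proof. extensionality b2; extensionality b1; apply cokernel_sym. Qed.

Lemma tens_kernel_le a1 a2 b : le (tens (kernel L R a1 a2) (R a2 b)) (R a1 b).
Proof.
  apply le_trans with (y := tens (biimp L (R a2 b) (R a1 b)) (R a2 b));
    [apply le_tens_l; rewrite biimp_sym; apply kernel_le | apply tens_biimp_le].
Qed.

Lemma tens_cokernel_le a b1 b2 : le (tens (R a b1) (cokernel L R b1 b2)) (R a b2).
Proof.
  rewrite tens_comm.
  apply le_trans with (y := tens (biimp L (R a b1) (R a b2)) (R a b1));
    [apply le_tens_l, cokernel_le | apply tens_biimp_le].
Qed.

Lemma kernel_rcomp : kernel L R ∘ R = R.
Proof.
  apply rle_antisym; [| apply rcomp_refl_l, kernel_refl].
  intros a b; apply rcomp_le; intro; apply tens_kernel_le.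
Qed.

Lemma cokernel_col_eq b1 b2 : cokernel L R b1 b2 = one -> forall a, R a b1 = R a b2.
Proof.
  intros H a; apply le_antisym.
  - rewrite <- (tens_one L (R a b1)), <- H; apply tens_cokernel_le.
  - rewrite <- (tens_one L (R a b2)), <- H, cokernel_sym; apply tens_cokernel_le.
Qed.

Lemma cokernel_row_eq b1 b2 : cokernel L R b1 b2 = one -> cokernel L R b1 = cokernel L R b2.
Proof.
  intro H; extensionality b; apply inf_ext; intro v.
  split; intros [a ->]; exists a; now rewrite (cokernel_col_eq _ _ H a).
Qed.

Lemma cokernel_eq_col b1 b2 : cokernel L R b1 = cokernel L R b2 -> forall a, R a b1 = R a b2.
Proof.
  intro H; apply cokernel_col_eq; rewrite H; apply cokernel_refl.
Qed.

End Kernels.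

Section Uniform.
Context {A B : Type} {R : frel L A B}.
Hypothesis hR : uniform L R.

Lemma cokernel_one_of_common a b1 b2 :
  R a b1 = one -> R a b2 = one -> cokernel L R b1 b2 = one.
Proof.
  intros H1 H2; apply le_antisym; [apply one_greatest |].
  apply le_trans with (y := tens (R a b1) (R a b2));
    [rewrite H1, H2, tens_one; apply le_refl | apply (proj2 (proj2 hR))].
Qed.

Lemma kernel_uniform : kernel L R = R ∘ R⁻¹.
Proof.
  destruct hR as (Htot & _ & Hcoh).
  apply rle_antisym; intros a1 a2.
  - destruct (Htot a1) as [b Hb].
    apply le_trans with (y := tens (R a1 b) (R a2 b)); [| exact (le_rcomp R R⁻¹ a1 b a2)].
    rewrite Hb, tens_one_l, kernel_sym, <- (tens_one L (kernel L R a2 a1)), <- Hb.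
    apply tens_kernel_le.
  - apply rcomp_le; intro b; unfold rinv.
    apply le_kernel; intro b'; apply le_biimp.
    + rewrite (tens_comm _ (R a1 b)), <- tens_assoc.
      apply le_trans with (y := tens (R a2 b) (cokernel L R b b'));
        [apply le_tens; [apply le_refl | apply Hcoh] | apply tens_cokernel_le].
    + rewrite <- tens_assoc.
      apply le_trans with (y := tens (R a1 b) (cokernel L R b b'));
        [apply le_tens; [apply le_refl | apply Hcoh] | apply tens_cokernel_le].
Qed.

Lemma cokernel_uniform : cokernel L R = R⁻¹ ∘ R.
Proof.
  destruct hR as (_ & Hsurj & Hcoh).
  apply rle_antisym; intros b1 b2.
  - destruct (Hsurj b1) as [a Ha].
    apply le_trans with (y := tens (R a b1) (R a b2)); [| exact (le_rcomp R⁻¹ R b1 a b2)].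
    rewrite Ha, tens_one_l, <- (tens_one_l (cokernel L R b1 b2)), <- Ha.
    apply tens_cokernel_le.
  - apply rcomp_le; intro a; apply Hcoh.
Qed.

Lemma uniform_difunctional : R ∘ R⁻¹ ∘ R = R.
Proof. rewrite <- kernel_uniform; apply kernel_rcomp. Qed.

Lemma kernel_section (psi : A -> B) :
  (forall a, R a (psi a) = one) -> forall a1 a2, kernel L R a1 a2 = R a2 (psi a1).
Proof.
  intros Hpsi a1 a2; apply le_antisym.
  - rewrite kernel_sym, <- (tens_one L (kernel L R a2 a1)), <- (Hpsi a1).
    apply tens_kernel_le.
  - rewrite kernel_uniform.
    apply le_trans with (y := tens (R a1 (psi a1)) (R a2 (psi a1)));
      [rewrite Hpsi, tens_one_l; apply le_refl | exact (le_rcomp R R⁻¹ a1 (psi a1) a2)].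
Qed.

Lemma uniform_section : exists psi : A -> B, forall a, R a (psi a) = one.
Proof.
  exists (fun a => proj1_sig (constructive_indefinite_description _ (proj1 hR a))).
  intro a; exact (proj2_sig (constructive_indefinite_description _ (proj1 hR a))).
Qed.

End Uniform.

Section Transport.
Context {A B : Type} (R : frel L A B) (V : frel L A A) (W : frel L B B).

Lemma RRinv_comm : R⁻¹ ∘ V ⊆ W ∘ R⁻¹ -> R ∘ W ⊆ V ∘ R -> R ∘ R⁻¹ ∘ V ⊆ V ∘ (R ∘ R⁻¹).
Proof.
  intros HV HW; apply rle_trans with (R ∘ W ∘ R⁻¹).
  - rewrite !rcomp_assoc; apply rcomp_mono; [apply rle_refl | exact HV].
  - rewrite <- rcomp_assoc; apply rcomp_mono; [exact HW | apply rle_refl].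
Qed.

Hypothesis difunctional : R ∘ R⁻¹ ∘ R = R.
Hypothesis refl_A : forall a, (R ∘ R⁻¹) a a = one.
Hypothesis refl_B : forall b, (R⁻¹ ∘ R) b b = one.

Lemma rcomp_R_RinvR : R ∘ (R⁻¹ ∘ R) = R.
Proof. rewrite <- rcomp_assoc; exact difunctional. Qed.

Lemma rcomp_RinvR_Rinv : R⁻¹ ∘ R ∘ R⁻¹ = R⁻¹.
Proof.
  transitivity (R ∘ R⁻¹ ∘ R)⁻¹; [now rewrite !rinv_rcomp, rcomp_assoc |].
  now rewrite difunctional.
Qed.

Lemma RinvR_sandwich : R⁻¹ ∘ V ⊆ W ∘ R⁻¹ -> R ∘ W ⊆ V ∘ R ->
  R⁻¹ ∘ R ∘ W ∘ (R⁻¹ ∘ R) = R⁻¹ ∘ V ∘ R.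
Proof.
  intros HV HW; apply rle_antisym.
  - apply rle_trans with (R⁻¹ ∘ (V ∘ R) ∘ (R⁻¹ ∘ R)).
    + rewrite (rcomp_assoc R⁻¹ R W).
      apply rcomp_mono; [apply rcomp_mono |]; auto using rle_refl.
    + rewrite !rcomp_assoc, rcomp_R_RinvR; apply rle_refl.
  - apply rle_trans with (W ∘ R⁻¹ ∘ R); [apply rcomp_mono; auto using rle_refl |].
    rewrite (rcomp_assoc W), (rcomp_assoc (R⁻¹ ∘ R) W).
    apply rcomp_refl_l, refl_B.
Qed.

Lemma Rinv_simulation_of_sandwich : R⁻¹ ∘ R ∘ W ∘ (R⁻¹ ∘ R) = R⁻¹ ∘ V ∘ R ->
  R⁻¹ ∘ R ∘ W ⊆ W ∘ (R⁻¹ ∘ R) -> R⁻¹ ∘ V ⊆ W ∘ R⁻¹.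
Proof.
  intros Hs Hc; apply rle_trans with (R⁻¹ ∘ V ∘ R ∘ R⁻¹).
  { rewrite (rcomp_assoc (R⁻¹ ∘ V)); apply rcomp_refl_r, refl_A. }
  rewrite <- Hs, (rcomp_assoc _ (R⁻¹ ∘ R) R⁻¹), rcomp_RinvR_Rinv.
  apply rle_trans with (W ∘ (R⁻¹ ∘ R) ∘ R⁻¹); [apply rcomp_mono; auto using rle_refl |].
  rewrite rcomp_assoc, rcomp_RinvR_Rinv; apply rle_refl.
Qed.

Lemma R_simulation_of_sandwich : R⁻¹ ∘ R ∘ W ∘ (R⁻¹ ∘ R) = R⁻¹ ∘ V ∘ R ->
  R ∘ R⁻¹ ∘ V ⊆ V ∘ (R ∘ R⁻¹) -> R ∘ W ⊆ V ∘ R.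
Proof.
  intros Hs Hc; apply rle_trans with (R ∘ W ∘ (R⁻¹ ∘ R)); [apply rcomp_refl_r, refl_B |].
  replace (R ∘ W ∘ (R⁻¹ ∘ R)) with (R ∘ (R⁻¹ ∘ R ∘ W ∘ (R⁻¹ ∘ R)))
    by now rewrite <- (rcomp_assoc R (R⁻¹ ∘ R ∘ W)), <- (rcomp_assoc R (R⁻¹ ∘ R)),
      rcomp_R_RinvR.
  rewrite Hs, <- !rcomp_assoc.
  apply rle_trans with (V ∘ (R ∘ R⁻¹) ∘ R); [apply rcomp_mono; auto using rle_refl |].
  rewrite rcomp_assoc, difunctional; apply rle_refl.
Qed.

End Transport.

Section UniformSimulation.
Context {A B : Type} {R : frel L A B}.
Hypothesis hR : uniform L R.

Lemma uniform_simulation_iff (V : frel L A A) (W : frel L B B) :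
  R⁻¹ ∘ V ⊆ W ∘ R⁻¹ /\ R ∘ W ⊆ V ∘ R <->
  kernel L R ∘ V ⊆ V ∘ kernel L R /\ cokernel L R ∘ W ⊆ W ∘ cokernel L R /\
  cokernel L R ∘ W ∘ cokernel L R = R⁻¹ ∘ V ∘ R.
Proof.
  pose proof (uniform_difunctional hR) as Hdifun.
  pose proof (kernel_refl R) as HreflA; pose proof (cokernel_refl R) as HreflB.
  rewrite (kernel_uniform hR) in HreflA |- *; rewrite (cokernel_uniform hR) in HreflB |- *.
  split.
  - intros [HV HW]; split; [| split].
    + exact (RRinv_comm R V W HV HW).
    + (* the kernel case for R⁻¹, whose inverse is R by conversion *)
      exact (RRinv_comm R⁻¹ W V HW HV).
    + exact (RinvR_sandwich R V W Hdifun HreflB HV HW).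
  - intros (HE & HF & Hs); split.
    + exact (Rinv_simulation_of_sandwich R V W Hdifun HreflA Hs HF).
    + exact (R_simulation_of_sandwich R V W Hdifun HreflB Hs HE).
Qed.

Lemma kernel_le_rcomp_rinv (Z : frel L A B) : R ⊆ Z -> kernel L R ⊆ Z ∘ Z⁻¹.
Proof.
  intro HRZ; rewrite (kernel_uniform hR).
  apply rcomp_mono; [exact HRZ | intros b a; apply HRZ].
Qed.

Lemma cokernel_le_rinv_rcomp (Z : frel L A B) : R ⊆ Z -> cokernel L R ⊆ Z⁻¹ ∘ Z.
Proof.
  intro HRZ; rewrite (cokernel_uniform hR).
  apply rcomp_mono; [intros b a; apply HRZ | exact HRZ].
Qed.

End UniformSimulation.

Lemma WL14_sol_of_sym {X I : Type} (V : I -> frel L X X) (W U : frel L X X) :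
  U⁻¹ = U -> (forall i, U ∘ V i ⊆ V i ∘ U) -> U ⊆ W -> WL14_sol L V W U.
Proof. intros Hsym Hc HW; unfold WL14_sol; rewrite Hsym; auto. Qed.

Section Quotients.
Context {X : Type} (E : frel L X X).

Lemma qrepr_spec (c : qset L E) : E (qrepr L c) = proj1_sig c.
Proof.
  unfold qrepr; destruct (constructive_indefinite_description _ _) as [x Hx]; now rewrite Hx.
Qed.

Lemma qset_eq (c1 c2 : qset L E) : proj1_sig c1 = proj1_sig c2 -> c1 = c2.
Proof.
  destruct c1 as [f1 p1], c2 as [f2 p2]; simpl; intros ->; f_equal; apply proof_irrelevance.
Qed.

Lemma qclass_qrepr (c : qset L E) : qclass L E (qrepr L c) = c.
Proof. apply qset_eq, qrepr_spec. Qed.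

Hypothesis E_sym : forall x y, E x y = E y x.

Lemma sandwich_congr (S : frel L X X) x1 x1' x2 x2' :
  E x1 = E x1' -> E x2 = E x2' -> (E ∘ S ∘ E) x1 x2 = (E ∘ S ∘ E) x1' x2'.
Proof.
  intros H1 H2; apply rcomp_ext; intro y.
  - apply rcomp_ext; intro; [now rewrite H1 | reflexivity].
  - now rewrite (E_sym y x2), (E_sym y x2'), H2.
Qed.

Lemma qrel_qclass (S : frel L X X) x1 x2 :
  qrel L E S (qclass L E x1) (qclass L E x2) = (E ∘ S ∘ E) x1 x2.
Proof. apply sandwich_congr; apply qrepr_spec. Qed.

End Quotients.

Section Rtilde.
Context {A B : Type} {R : frel L A B} {psi : A -> B}.
Hypothesis hR : uniform L R.
Hypothesis Hpsi : forall a, R a (psi a) = one.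

Lemma Rtilde_row (c : qset L (kernel L R)) :
  proj1_sig (Rtilde L R psi c) = cokernel L R (psi (qrepr L c)).
Proof. reflexivity. Qed.

Lemma qrel_kernel (V : frel L A A) (c1 c2 : qset L (kernel L R)) :
  qrel L (kernel L R) V c1 c2 = (R⁻¹ ∘ V ∘ R) (psi (qrepr L c1)) (psi (qrepr L c2)).
Proof.
  apply rcomp_ext; intro a.
  - apply rcomp_ext; intro; [apply (kernel_section hR psi Hpsi) | reflexivity].
  - rewrite kernel_sym; apply (kernel_section hR psi Hpsi).
Qed.

Lemma qrel_cokernel_Rtilde (W : frel L B B) (c1 c2 : qset L (kernel L R)) :
  qrel L (cokernel L R) W (Rtilde L R psi c1) (Rtilde L R psi c2) =
  (cokernel L R ∘ W ∘ cokernel L R) (psi (qrepr L c1)) (psi (qrepr L c2)).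
Proof. apply qrel_qclass, cokernel_sym. Qed.

Lemma Rtilde_injective (c1 c2 : qset L (kernel L R)) :
  Rtilde L R psi c1 = Rtilde L R psi c2 -> c1 = c2.
Proof.
  intro Heq; apply (f_equal (@proj1_sig _ _)) in Heq; rewrite !Rtilde_row in Heq.
  apply qset_eq; rewrite <- !qrepr_spec; extensionality a.
  rewrite !(kernel_section hR psi Hpsi); now apply cokernel_eq_col.
Qed.

Lemma Rtilde_onto_qclass b : exists c, Rtilde L R psi c = qclass L (cokernel L R) b.
Proof.
  destruct (proj1 (proj2 hR) b) as [a Ha].
  exists (qclass L (kernel L R) a); apply qset_eq; rewrite Rtilde_row; simpl.
  apply cokernel_row_eq, (cokernel_one_of_common hR a); [| exact Ha].
  rewrite <- (kernel_section hR psi Hpsi), qrepr_spec; apply kernel_refl.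
Qed.

Lemma fiso_Rtilde {I : Type} (V : I -> frel L A A) (W : I -> frel L B B) :
  (forall i, cokernel L R ∘ W i ∘ cokernel L R = R⁻¹ ∘ V i ∘ R) ->
  fiso L (fun i => qrel L (kernel L R) (V i)) (fun i => qrel L (cokernel L R) (W i))
    (Rtilde L R psi).
Proof.
  intro Hs; split; [exact Rtilde_injective | split].
  - intro d; destruct (Rtilde_onto_qclass (qrepr L d)) as [c Hc].
    exists c; now rewrite Hc, qclass_qrepr.
  - intros i c1 c2; now rewrite qrel_kernel, qrel_cokernel_Rtilde, Hs.
Qed.

Lemma sandwich_of_fiso_Rtilde {I : Type} (V : I -> frel L A A) (W : I -> frel L B B) :
  fiso L (fun i => qrel L (kernel L R) (V i)) (fun i => qrel L (cokernel L R) (W i))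
    (Rtilde L R psi) ->
  forall i, cokernel L R ∘ W i ∘ cokernel L R = R⁻¹ ∘ V i ∘ R.
Proof.
  intros (_ & _ & Hrel) i; extensionality b1; extensionality b2.
  destruct (Rtilde_onto_qclass b1) as [c1 Hc1], (Rtilde_onto_qclass b2) as [c2 Hc2].
  apply (f_equal (@proj1_sig _ _)) in Hc1, Hc2; rewrite Rtilde_row in Hc1, Hc2.
  rewrite (sandwich_congr _ (cokernel_sym R) _ _ _ _ _ (eq_sym Hc1) (eq_sym Hc2)).
  rewrite <- qrel_cokernel_Rtilde, <- Hrel, qrel_kernel.
  apply rcomp_ext; intro a; [apply rcomp_ext; intro; [unfold rinv | reflexivity] |];
    now apply cokernel_eq_col.
Qed.

End Rtilde.

End FuzzyRelations.

Theorem theorem7p2 (L : CRL) (A B I : Type)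
  (hA : inhabited A) (hB : inhabited B) (hI : inhabited I)
  (V : I -> frel L A A) (W : I -> frel L B B) (R Z : frel L A B)
  (hR : uniform L R) (hRZ : rle L R Z) :
  WL23_sol L V W Z R <->
  (WL14_sol L V (rcomp L Z (rinv L Z)) (kernel L R) /\
   WL14_sol L W (rcomp L (rinv L Z) Z) (cokernel L R) /\
   (forall psi : A -> B, (forall a, R a (psi a) = one) ->
      fiso L (fun i => qrel L (kernel L R) (V i))
             (fun i => qrel L (cokernel L R) (W i))
             (Rtilde L R psi))).
Proof.
  split.
  - intros (HV & HW & _).
    pose proof (fun i => proj1 (uniform_simulation_iff hR (V i) (W i)) (conj (HV i) (HW i)))
      as Hcond.
    split; [| split].
    + apply WL14_sol_of_sym; [apply rinv_kernel | apply Hcond | ].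
      now apply kernel_le_rcomp_rinv.
    + apply WL14_sol_of_sym; [apply rinv_cokernel | apply Hcond | ].
      now apply cokernel_le_rinv_rcomp.
    + intros psi Hpsi; apply (fiso_Rtilde hR Hpsi); apply Hcond.
  - intros ((HE & _) & (HF & _) & Hiso).
    destruct (uniform_section hR) as [psi Hpsi].
    pose proof (sandwich_of_fiso_Rtilde hR Hpsi V W (Hiso psi Hpsi)) as Hs.
    pose proof (fun i => proj2 (uniform_simulation_iff hR (V i) (W i))
                               (conj (HE i) (conj (HF i) (Hs i)))) as Hsim.
    split; [| split]; [apply Hsim | apply Hsim | exact hRZ].
Qed.
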